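(* Let $A$ be an AUF algebra and let $e\in A$ be a generating idempotent. Then the map $A\to\mathrm{End}^0_{-,eAe}(Ae)$ sending each $a\in A$ to the operator of left multiplication by $a$ on $Ae$ is a linear isomorphism.
   Context: All algebras are associative $\mathbb C$-algebras, not necessarily unital. An idempotent is $e$ with $e^2=e$. An algebra $A$ is AUF if there is a family $(e_i)_{i\in\mathfrak I}$ of mutually orthogonal idempotents with $\dim e_iAe_j<\infty$ and $A=\sum_{i,j}e_iAe_j$. A left $A$-module $M$ is quasicoherent if $\xi\in A\xi$ for all $\xi\in M$. Irreducible means nonzero with no nonzero proper submodules. An idempotent $e$ is generating if every irreducible quasicoherent left $A$-module is a quotient of $Ae$. For a quasicoherent left $A$-module $M$: $M^\vee$ is the space of linear functionals $\varphi$ on $M$ for which there is an idempotent $f\in A$ with $\varphi(f\eta)=\varphi(\eta)$ for all $\eta$; $\mathrm{End}^0(M)$ is the span in $\mathrm{End}(M)$ of the operators $\eta\mapsto\varphi(\eta)\xi$ with $\xi\in M$, $\varphi\in M^\vee$; if $M$ carries a right action of an algebra $C$ commuting with $A$, $\mathrm{End}^0_{-,C}(M)=\{T\in\mathrm{End}^0(M):T(\xi c)=T(\xi)c\ \forall\xi,c\}$. Here $Ae$ carries the right action of $eAe$ by multiplication. *)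

From mathcomp Require Import all_boot all_algebra.
From mathcomp Require Export complex reals.
Set Implicit Arguments. Unset Strict Implicit. Unset Printing Implicit Defensive.
Import GRing.Theory.
Local Open Scope ring_scope.

Section NuAlg.
Variable K : fieldType.

Definition is_nualg (A : lmodType K) (mul : A -> A -> A) : Prop :=
  [/\ forall a b c, mul a (mul b c) = mul (mul a b) c,
      forall (k : K) a b c, mul (k *: a + b) c = k *: mul a c + mul b c
    & forall (k : K) a b c, mul a (k *: b + c) = k *: mul a b + mul a c].

Definition fin_dim (V : lmodType K) (P : V -> Prop) : Prop :=
  exists s : seq V, forall x, P x ->
    exists c : 'I_(size s) -> K, x = \sum_(i < size s) c i *: s`_i.

Variables (A : lmodType K) (mul : A -> A -> A).

Definition idempotent (e : A) : Prop := mul e e = e.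

Definition AUF : Prop :=
  exists (I : Type) (E : I -> A),
    [/\ forall i, idempotent (E i),
        forall i j, i <> j -> mul (E i) (E j) = 0,
        forall i j, fin_dim (fun x : A => exists a, x = mul (mul (E i) a) (E j))
      & forall a : A, exists s : seq (I * I * A),
          a = \sum_(t <- s) mul (mul (E t.1.1) t.2) (E t.1.2)].

Definition is_module (M : lmodType K) (act : A -> M -> M) : Prop :=
  [/\ forall a b m, act (mul a b) m = act a (act b m),
      forall (k : K) a b m, act (k *: a + b) m = k *: act a m + act b m
    & forall (k : K) a m n, act a (k *: m + n) = k *: act a m + act a n].

Definition quasicoherent (M : lmodType K) (act : A -> M -> M) : Prop :=
  forall xi : M, exists a : A, act a xi = xi.

Definition is_submodule (M : lmodType K) (act : A -> M -> M) (P : M -> Prop) :=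
  [/\ P 0, forall (k : K) m n, P m -> P n -> P (k *: m + n)
    & forall a m, P m -> P (act a m)].

Definition irreducible (M : lmodType K) (act : A -> M -> M) : Prop :=
  (exists m : M, m <> 0) /\
  forall P : M -> Prop, is_submodule act P ->
    (forall m, P m -> m = 0) \/ (forall m, P m).

Definition in_Ae (e x : A) : Prop := exists a : A, x = mul a e.

(* M is a quotient of the left A-module Ae: there is a surjective
   A-module map Ae -> M (represented by a function on A, only its
   restriction to Ae matters) *)
Definition quotient_of_Ae (e : A) (M : lmodType K) (act : A -> M -> M) : Prop :=
  exists f : A -> M,
    [/\ forall (k : K) x y, in_Ae e x -> in_Ae e y -> f (k *: x + y) = k *: f x + f y,
        forall a x, in_Ae e x -> f (mul a x) = act a (f x)
      & forall m : M, exists2 x, in_Ae e x & f x = m].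

Definition generating (e : A) : Prop :=
  idempotent e /\
  forall (M : lmodType K) (act : A -> M -> M),
    is_module act -> quasicoherent act -> irreducible act -> quotient_of_Ae e act.

Definition in_dual_Ae (e : A) (phi : A -> K) : Prop :=
  (forall (k : K) x y, in_Ae e x -> in_Ae e y -> phi (k *: x + y) = k * phi x + phi y) /\
  exists f : A, idempotent f /\ forall eta, in_Ae e eta -> phi (mul f eta) = phi eta.

(* End^0(Ae): operators on Ae (functions A -> A restricted to Ae) in the span
   of the rank-one operators eta |-> phi(eta) xi, xi in Ae, phi in (Ae)^vee *)
Definition in_End0_Ae (e : A) (T : A -> A) : Prop :=
  exists (n : nat) (phi : 'I_n -> A -> K) (xi : 'I_n -> A),
    [/\ forall k, in_dual_Ae e (phi k),
        forall k, in_Ae e (xi k)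
      & forall eta, in_Ae e eta -> T eta = \sum_(k < n) phi k eta *: xi k].

Definition in_End0_right_Ae (e : A) (T : A -> A) : Prop :=
  in_End0_Ae e T /\
  forall xi c, in_Ae e xi -> (exists b, c = mul (mul e b) e) ->
    T (mul xi c) = mul (T xi) c.

End NuAlg.

(* Left multiplication is linear and commutes with the right action of eAe;
   everything else rests on the equality A e A = A.  If an idempotent E of the
   AUF family were not in A e A, a maximal left ideal of the finite-dimensional
   corner algebra E A E containing E A e A E but not E yields a functional lam
   with lam E = 1 vanishing on it, and the matrix coefficients
   a |-> lam (E a x E) span a simple quasicoherent module killed by e, which
   is not a quotient of A e.  So every local unit u = sum E_l is a sum of
   terms p e q: an element c annihilating A e satisfies c = c u = 0, and T
   commuting with eAe satisfies T x = T (u x) = sum T (p e) (e q x), i.e. it is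
   left multiplication by sum T (p e) (e q).  Conversely x |-> E_i b E_j x has
   finite rank on A e, because E_j A e is spanned by the finite-dimensional
   spaces E_j A E_k (q E_l) coming from a decomposition of e. *)

From HB Require Import structures.
From mathcomp Require Import all_boot all_algebra complex reals boolp.
Set Implicit Arguments. Unset Strict Implicit. Unset Printing Implicit Defensive.
Import GRing.Theory.
Local Open Scope ring_scope.

Section Subspaces.
Variables (K : fieldType) (A : lmodType K).

Definition subspace (P : A -> Prop) :=
  P 0 /\ forall k x y, P x -> P y -> P (k *: x + y).

Definition linear_on (P : A -> Prop) (phi : A -> K) :=
  forall k x y, P x -> P y -> phi (k *: x + y) = k * phi x + phi y.

Lemma subspace_sum P (I : Type) (r : seq I) (F : I -> A) :
  subspace P -> (forall i, P (F i)) -> P (\sum_(i <- r) F i).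
Proof.
move=> [P0 PC] PF; elim: r => [|i r IH]; first by rewrite big_nil.
by rewrite big_cons -[F i]scale1r; apply: PC.
Qed.

Lemma subspaceZ P k x : subspace P -> P x -> P (k *: x).
Proof. by move=> [P0 PC] Px; rewrite -[_ *: _]addr0; apply: PC. Qed.

Lemma linear_on0 P phi : subspace P -> linear_on P phi -> phi 0 = 0.
Proof.
move=> [P0 _] phiL; have := phiL 1 0 0 P0 P0; rewrite scale1r addr0 mul1r => h.
by apply: (addrI (phi 0)); rewrite addr0 -h.
Qed.

End Subspaces.

Lemma exists_max_rank (K : fieldType) (m n : nat) (P : 'M[K]_(m, n) -> Prop) X :
  P X -> exists2 X0, P X0 & forall Y, P Y -> (\rank Y <= \rank X0)%N.
Proof.
move=> PX; pose Prank k := `[< exists2 Y, P Y & \rank Y = k >].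
have exP : exists k, Prank k by exists (\rank X); apply/asboolP; exists X.
have ubP k : Prank k -> (k <= n)%N by move/asboolP => [Y _ <-]; apply: rank_leq_col.
case: (ex_maxnP exP ubP) => k /asboolP [X0 PX0 <-] maxk; exists X0 => // Y PY.
by apply: maxk; apply/asboolP; exists Y.
Qed.

Lemma row_subspace_repr (K : fieldType) (n : nat) (Q : 'rV[K]_n -> Prop) :
  subspace Q -> exists X : 'M[K]_n, forall r, Q r <-> (r <= X)%MS.
Proof.
move=> [Q0 QC].
have Psub0 r : (r <= (0 : 'M[K]_n))%MS -> Q r by rewrite submx0 => /eqP ->.
have [X Xsub Xmax] := exists_max_rank (P := fun X => forall r, (r <= X)%MS -> Q r) Psub0.
exists X => r; split=> [Qr|]; last exact: Xsub.
apply: contrapT => /negP rX.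
have XrQ r' : (r' <= X + r)%MS -> Q r'.
  move=> /sub_addsmxP [[u v] /= ->]; rewrite [v]mx11_scalar mul_scalar_mx addrC.
  by apply: QC => //; apply: Xsub; apply: submxMl.
have := Xmax _ XrQ; rewrite leqNgt => /negP; apply; apply: rank_ltmx.
by rewrite ltmxE addsmxSl; apply: contra rX; apply: submx_trans (addsmxSr _ _).
Qed.

Section FiniteSpan.
Variables (K : fieldType) (A : lmodType K) (S : seq A).
Local Notation N := (size S).

Definition comb (r : 'rV[K]_N) : A := \sum_(i < N) r 0 i *: S`_i.

Fact comb_is_linear : linear comb.
Proof.
move=> k r r'; rewrite /comb scaler_sumr -big_split; apply: eq_bigr => i _.
by rewrite !mxE scalerDl scalerA.
Qed.
HB.instance Definition _ := GRing.isLinear.Build K _ _ _ comb comb_is_linear.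

Definition in_span (x : A) := exists r, x = comb r.

Lemma in_span_subspace : subspace in_span.
Proof.
split; first by exists 0; rewrite linear0.
by move=> k _ _ [r ->] [r' ->]; exists (k *: r + r'); rewrite linearP.
Qed.

Lemma mem_in_span x : x \in S -> in_span x.
Proof.
move=> xS; have ix : (index x S < N)%N by rewrite index_mem.
exists (delta_mx 0 (Ordinal ix)); rewrite /comb (bigD1 (Ordinal ix)) //= mxE !eqxx.
rewrite scale1r nth_index // big1 ?addr0 // => j nj.
by rewrite mxE (negbTE nj) andbF scale0r.
Qed.

Definition span_coords (x : A) : 'rV[K]_N :=
  if pselect (in_span x) is left h then proj1_sig (cid h) else 0.

Lemma comb_span_coords x : in_span x -> comb (span_coords x) = x.
Proof.
by rewrite /span_coords; case: pselect => // h _; case: (cid h) => r /= ->.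
Qed.

Definition rowspace_image (X : 'M[K]_N) (x : A) := exists2 r, (r <= X)%MS & x = comb r.

Lemma subspace_rowspace_image P :
  subspace P -> (forall x, P x -> in_span x) ->
  exists X, (forall r, P (comb r) <-> (r <= X)%MS) /\ rowspace_image X = P.
Proof.
move=> [P0 PC] Pspan.
have [X HX] : exists X : 'M[K]_N, forall r, P (comb r) <-> (r <= X)%MS.
  apply: row_subspace_repr; split=> [|k r r']; first by rewrite linear0.
  by rewrite linearP; apply: PC.
exists X; split=> //; apply: funext => x; apply: propext; split.
  by move=> [r /HX Pr ->].
by move=> Px; have [r er] := Pspan x Px; exists r => //; apply/HX; rewrite -er.
Qed.

Lemma rowspace_image_subspace X : subspace (rowspace_image X).
Proof.
split; first by exists 0; rewrite ?sub0mx ?linear0.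
move=> k _ _ [r rX ->] [r' r'X ->]; exists (k *: r + r'); last by rewrite linearP.
by rewrite addmx_sub ?scalemx_sub.
Qed.

Lemma rowspace_image_span X x : rowspace_image X x -> in_span x.
Proof. by move=> [r _ ->]; exists r. Qed.

Definition descend (psi : 'rV[K]_N -> K) (x : A) : K := psi (span_coords x).

Section Descend.
Variable psi : 'rV[K]_N -> K.
Hypothesis psiL : forall k r r', psi (k *: r + r') = k * psi r + psi r'.
Hypothesis psi_ker : forall r, comb r = 0 -> psi r = 0.

Lemma descend_comb r : descend psi (comb r) = psi r.
Proof.
have psiB r1 r2 : psi (r1 - r2) = psi r1 - psi r2.
  by rewrite addrC -scaleN1r psiL mulN1r addrC.
apply/eqP; rewrite -subr_eq0 -psiB psi_ker // linearB /=.
by rewrite comb_span_coords ?subrr //; exists r.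
Qed.

Lemma descend_linear : linear_on in_span (descend psi).
Proof. by move=> k _ _ [r ->] [r' ->]; rewrite -linearP !descend_comb psiL. Qed.

End Descend.

Lemma span_coordinates : exists n (phi : 'I_n -> A -> K) (zeta : 'I_n -> A),
  (forall j, linear_on in_span (phi j)) /\
  (forall y, in_span y -> y = \sum_(j < n) phi j y *: zeta j).
Proof.
have ker0 : subspace (fun x : A => x = 0).
  by split=> // k x y -> ->; rewrite scaler0 addr0.
have span0 x : x = 0 -> in_span x by move->; case: in_span_subspace.
have [X [HX _]] := subspace_rowspace_image ker0 span0.
pose C := cokermx X.
have kerC r : comb r = 0 <-> r *m C = 0 by rewrite HX submxE; split => [/eqP|->].
pose psi (j : 'I_N) (r : 'rV[K]_N) := (r *m C) 0 j.
have psiL j k r r' : psi j (k *: r + r') = k * psi j r + psi j r'.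
  by rewrite /psi mulmxDl -scalemxAl !mxE.
have psi_ker j r : comb r = 0 -> psi j r = 0 by move/kerC; rewrite /psi => ->; rewrite mxE.
exists N, (fun j => descend (psi j)), (fun j => comb (row j (pinvmx C))); split.
  by move=> j; apply: descend_linear; [apply: psiL | apply: psi_ker].
move=> _ [r ->].
have -> : \sum_(j < N) descend (psi j) (comb r) *: comb (row j (pinvmx C)) =
          comb (r *m C *m pinvmx C).
  rewrite (mulmx_sum_row (r *m C)) linear_sum; apply: eq_bigr => j _ /=.
  by rewrite linearZ (descend_comb (psiL j) (psi_ker j)).
apply/eqP; rewrite -subr_eq0 -linearB; apply/eqP/kerC.
by rewrite mulmxBl mulmxKpV ?subrr // submxMl.
Qed.

Lemma separating_functional P y :
  subspace P -> (forall x, P x -> in_span x) -> in_span y -> ~ P y ->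
  exists lam, [/\ linear_on in_span lam, forall x, P x -> lam x = 0 & lam y = 1].
Proof.
move=> Psub Pspan [ry ->] Py.
have [X [HX _]] := subspace_rowspace_image Psub Pspan.
pose C := cokermx X.
have /existsP [j nzj] : [exists j, (ry *m C) 0 j != 0].
  apply: contra_notT Py => /existsPn ryC; apply/HX; rewrite submxE.
  by apply/eqP/rowP => j; move: (ryC j); rewrite negbK [RHS]mxE => /eqP.
pose psi (r : 'rV[K]_N) := (r *m C) 0 j / (ry *m C) 0 j.
have psiL k r r' : psi (k *: r + r') = k * psi r + psi r'.
  by rewrite /psi mulmxDl -scalemxAl !mxE mulrDl mulrA.
have psiX r : (r <= X)%MS -> psi r = 0 by rewrite /psi submxE => /eqP ->; rewrite mxE mul0r.
have psi_ker r : comb r = 0 -> psi r = 0.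
  by move=> r0; apply/psiX/HX; rewrite r0; case: Psub.
exists (descend psi); split; first exact: descend_linear.
  move=> x Px; have [r er] := Pspan x Px.
  by rewrite er (descend_comb psiL psi_ker) psiX // -HX -er.
by rewrite (descend_comb psiL psi_ker) /psi divff.
Qed.

Lemma maximal_subspace (Good : (A -> Prop) -> Prop) P :
  subspace P -> (forall x, P x -> in_span x) -> Good P ->
  exists X, [/\ subspace X, forall x, X x -> in_span x, Good X &
    forall Y, subspace Y -> (forall x, Y x -> in_span x) -> Good Y ->
      (forall x, X x -> Y x) -> forall x, Y x -> X x].
Proof.
move=> Psub Pspan GP.
have [XP [_ eXP]] := subspace_rowspace_image Psub Pspan.
have GXP : Good (rowspace_image XP) by rewrite eXP.
have [X0 GX0 maxX0] := exists_max_rank (P := fun X => Good (rowspace_image X)) GXP.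
exists (rowspace_image X0); split=> //.
- exact: rowspace_image_subspace.
- exact: rowspace_image_span.
move=> Y Ysub Yspan GY X0Y.
have [XY [HXY eXY]] := subspace_rowspace_image Ysub Yspan.
have X0XY : (X0 <= XY)%MS.
  by apply/row_subP => i; apply/HXY/X0Y; exists (row i X0); rewrite ?row_sub.
have XYX0 : (XY <= X0)%MS.
  rewrite -(mxrank_leqif_sup X0XY).2 eqn_leq mxrankS //=.
  by apply: maxX0; rewrite eXY.
by rewrite -eXY => x [r rXY ->]; exists r => //; apply: submx_trans XYX0.
Qed.

End FiniteSpan.

Lemma fin_dim_in_span (K : fieldType) (A : lmodType K) (P : A -> Prop) :
  fin_dim P -> exists S, forall x, P x -> in_span S x.
Proof.
move=> [S HS]; exists S => x /HS [c ->]; exists (\row_i c i).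
by apply: eq_bigr => i _; rewrite mxE.
Qed.

Lemma in_span_sub (K : fieldType) (A : lmodType K) (S S' : seq A) x :
  (forall y, y \in S -> in_span S' y) -> in_span S x -> in_span S' x.
Proof.
move=> SS' [r ->]; apply: subspace_sum (in_span_subspace S') _ => i.
by apply: subspaceZ (in_span_subspace S') _; apply/SS'/mem_nth.
Qed.

Lemma in_span_sum (K : fieldType) (A : lmodType K) (B T : Type) (s : seq T)
    (f : T -> B -> A) :
  (forall t, exists S, forall b, in_span S (f t b)) ->
  exists S, forall b, in_span S (\sum_(t <- s) f t b).
Proof.
move=> fS; elim: s => [|t s [S' HS']].
  by exists [::] => b; rewrite big_nil; case: (in_span_subspace (Nil A)).
have [S HS] := fS t; exists (S ++ S') => b; rewrite big_cons -[f t b]scale1r.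
apply: (in_span_subspace _).2.
  by apply: in_span_sub _ (HS b) => y yS; apply: mem_in_span; rewrite mem_cat yS.
by apply: in_span_sub _ (HS' b) => y yS; apply: mem_in_span; rewrite mem_cat yS orbT.
Qed.

Section FunctionSpan.
Variables (K : fieldType) (T X : Type) (F : X -> T -> K).

Definition in_fspan (g : T -> K) :=
  exists xs : seq (K * X), g = fun t => \sum_(p <- xs) p.1 * F p.2 t.

Definition fspan := {g | in_fspan g}.
HB.instance Definition _ := gen_eqMixin fspan.
HB.instance Definition _ := gen_choiceMixin fspan.

Lemma fspan_inj (u v : fspan) : sval u =1 sval v -> u = v.
Proof. by case: u v => [g Hg] [h Hh] /= /funext eq; subst h; congr exist. Qed.

Lemma in_fspan0 : in_fspan (fun _ => 0).
Proof. by exists [::]; apply: funext => t; rewrite big_nil. Qed.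

Lemma in_fspanD g h : in_fspan g -> in_fspan h -> in_fspan (fun t => g t + h t).
Proof. by move=> [xs ->] [ys ->]; exists (xs ++ ys); apply: funext => t; rewrite big_cat. Qed.

Lemma in_fspanZ k g : in_fspan g -> in_fspan (fun t => k * g t).
Proof.
move=> [xs ->]; exists [seq (k * p.1, p.2) | p <- xs]; apply: funext => t.
by rewrite big_map mulr_sumr; apply: eq_bigr => p _; rewrite mulrA.
Qed.

Lemma in_fspan_gen x : in_fspan (F x).
Proof. by exists [:: (1, x)]; apply: funext => t; rewrite big_seq1 mul1r. Qed.

Lemma in_fspan_comp (h : T -> T) (h' : X -> X) :
  (forall x t, F x (h t) = F (h' x) t) -> forall g, in_fspan g -> in_fspan (g \o h).
Proof.
move=> Fh _ [xs ->]; exists [seq (p.1, h' p.2) | p <- xs]; apply: funext => t /=.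
by rewrite big_map; apply: eq_bigr => p _; rewrite Fh.
Qed.

Definition fspan_zero : fspan := exist _ _ in_fspan0.
Definition fspan_add (u v : fspan) : fspan := exist _ _ (in_fspanD (svalP u) (svalP v)).
Definition fspan_scale k (u : fspan) : fspan := exist _ _ (in_fspanZ k (svalP u)).
Definition fspan_opp (u : fspan) : fspan := fspan_scale (-1) u.

Fact fspan_addA : associative fspan_add.
Proof. by move=> u v w; apply: fspan_inj => t /=; rewrite addrA. Qed.
Fact fspan_addC : commutative fspan_add.
Proof. by move=> u v; apply: fspan_inj => t /=; rewrite addrC. Qed.
Fact fspan_add0 : left_id fspan_zero fspan_add.
Proof. by move=> u; apply: fspan_inj => t /=; rewrite add0r. Qed.
Fact fspan_addN : left_inverse fspan_zero fspan_opp fspan_add.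
Proof. by move=> u; apply: fspan_inj => t /=; rewrite mulN1r addNr. Qed.
HB.instance Definition _ :=
  GRing.isZmodule.Build fspan fspan_addA fspan_addC fspan_add0 fspan_addN.

Fact fspan_scaleA a b u : fspan_scale a (fspan_scale b u) = fspan_scale (a * b) u.
Proof. by apply: fspan_inj => t /=; rewrite mulrA. Qed.
Fact fspan_scale1 : left_id 1 fspan_scale.
Proof. by move=> u; apply: fspan_inj => t /=; rewrite mul1r. Qed.
Fact fspan_scaleDr : right_distributive fspan_scale +%R.
Proof. by move=> k u v; apply: fspan_inj => t /=; rewrite mulrDr. Qed.
Fact fspan_scaleDl u : {morph fspan_scale^~ u : a b / a + b}.
Proof. by move=> a b; apply: fspan_inj => t /=; rewrite mulrDl. Qed.
HB.instance Definition _ := GRing.Zmodule_isLmodule.Build K fspan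
  fspan_scaleA fspan_scale1 fspan_scaleDr fspan_scaleDl.

End FunctionSpan.

Section NuAlgebra.
Variables (K : fieldType) (A : lmodType K) (mul : A -> A -> A).
Hypothesis Hnu : is_nualg mul.

Lemma nmulA a b c : mul a (mul b c) = mul (mul a b) c.
Proof. by case: Hnu. Qed.

Lemma nmulDZl k a b c : mul (k *: a + b) c = k *: mul a c + mul b c.
Proof. by case: Hnu. Qed.

Lemma nmulDZr k a b c : mul a (k *: b + c) = k *: mul a b + mul a c.
Proof. by case: Hnu. Qed.

Lemma nmul0l c : mul 0 c = 0.
Proof.
have := nmulDZl 1 0 0 c; rewrite !scale1r !addr0 => h.
by apply: (addrI (mul 0 c)); rewrite addr0 -h.
Qed.

Lemma nmul0r c : mul c 0 = 0.
Proof.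
have := nmulDZr 1 c 0 0; rewrite !scale1r !addr0 => h.
by apply: (addrI (mul c 0)); rewrite addr0 -h.
Qed.

Lemma nmulDl a b c : mul (a + b) c = mul a c + mul b c.
Proof. by rewrite -[a]scale1r nmulDZl !scale1r. Qed.

Lemma nmulDr a b c : mul a (b + c) = mul a b + mul a c.
Proof. by rewrite -[b]scale1r nmulDZr !scale1r. Qed.

Lemma nmulZl k a c : mul (k *: a) c = k *: mul a c.
Proof. by rewrite -[k *: a]addr0 nmulDZl nmul0l addr0. Qed.

Lemma nmulZr k a c : mul a (k *: c) = k *: mul a c.
Proof. by rewrite -[k *: c]addr0 nmulDZr nmul0r addr0. Qed.

Lemma nmulBl a b c : mul (a - b) c = mul a c - mul b c.
Proof. by rewrite -scaleN1r addrC nmulDZl scaleN1r addrC. Qed.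

Lemma nmul_suml (I : Type) (r : seq I) (F : I -> A) c :
  mul (\sum_(i <- r) F i) c = \sum_(i <- r) mul (F i) c.
Proof. exact: (big_morph (mul^~ c) (fun a b => nmulDl a b c) (nmul0l c)). Qed.

Lemma nmul_sumr (I : Type) (r : seq I) (F : I -> A) c :
  mul c (\sum_(i <- r) F i) = \sum_(i <- r) mul c (F i).
Proof. exact: (big_morph (mul c) (nmulDr c) (nmul0r c)). Qed.

Definition corner (E y : A) := exists a, y = mul (mul E a) E.

Definition in_AeA (e y : A) :=
  exists ps : seq (A * A), y = \sum_(p <- ps) mul (mul p.1 e) p.2.

Lemma in_span_mulr (S : seq A) z q :
  in_span S z -> in_span [seq mul s q | s <- S] (mul z q).
Proof.
move=> [r ->]; rewrite /comb nmul_suml; apply: subspace_sum (in_span_subspace _) _ => i.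
rewrite nmulZl; apply: subspaceZ (in_span_subspace _) _.
by apply/mem_in_span/map_f/mem_nth.
Qed.

Lemma corner_subspace E : subspace (corner E).
Proof.
split; first by exists 0; rewrite nmul0r nmul0l.
by move=> k _ _ [a ->] [b ->]; exists (k *: a + b); rewrite nmulDZr nmulDZl.
Qed.

Lemma corner_mul E u y : corner E u -> corner E y -> corner E (mul u y).
Proof. by move=> [a ->] [b ->]; exists (mul (mul (mul a E) E) b); rewrite !nmulA. Qed.

Section IdempotentCorner.
Variable E : A.
Hypothesis EE : mul E E = E.

Lemma corner_id : corner E E.
Proof. by exists E; rewrite !EE. Qed.

Lemma corner_mulIl y : corner E y -> mul E y = y.
Proof. by move=> [a ->]; rewrite !nmulA EE. Qed.

Lemma corner_mulIr y : corner E y -> mul y E = y.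
Proof. by move=> [a ->]; rewrite -!nmulA EE. Qed.

End IdempotentCorner.

Lemma in_AeA_subspace e : subspace (in_AeA e).
Proof.
split; first by exists [::]; rewrite big_nil.
move=> k _ _ [ps ->] [qs ->]; exists ([seq (k *: p.1, p.2) | p <- ps] ++ qs).
by rewrite big_cat big_map scaler_sumr; congr (_ + _); apply: eq_bigr => p _; rewrite !nmulZl.
Qed.

Lemma in_AeA_mull e u y : in_AeA e y -> in_AeA e (mul u y).
Proof.
move=> [ps ->]; exists [seq (mul u p.1, p.2) | p <- ps].
by rewrite big_map nmul_sumr; apply: eq_bigr => p _; rewrite !nmulA.
Qed.

Lemma in_AeA_mid e u v : in_AeA e (mul (mul u e) v).
Proof. by exists [:: (u, v)]; rewrite big_seq1. Qed.

Section LocalUnits.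
Variables (I : Type) (E : I -> A).
Hypothesis Eid : forall i, mul (E i) (E i) = E i.
Hypothesis Eorth : forall i j, i <> j -> mul (E i) (E j) = 0.
Hypothesis Edec : forall a : A, exists s : seq (I * I * A),
  a = \sum_(t <- s) mul (mul (E t.1.1) t.2) (E t.1.2).

Definition absorbs (u x : A) := mul u x = x /\ mul x u = x.

Definition partial_unit (u : A) :=
  (exists L : seq I, u = \sum_(l <- L) E l) /\
  forall l, absorbs u (E l) \/ (mul u (E l) = 0 /\ mul (E l) u = 0).

Lemma absorbs_subspace u : subspace (absorbs u).
Proof.
split; first by split; rewrite ?nmul0l ?nmul0r.
by move=> k x y [ux xu] [uy yu]; split; rewrite ?nmulDZr ?nmulDZl ?ux ?xu ?uy ?yu.
Qed.

Lemma absorbs_corner u i j b :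
  absorbs u (E i) -> absorbs u (E j) -> absorbs u (mul (mul (E i) b) (E j)).
Proof. by move=> [ui _] [_ ju]; split; [rewrite !nmulA ui | rewrite -nmulA ju]. Qed.

Lemma partial_unit0 : partial_unit 0.
Proof. by split=> [|l]; [exists [::]; rewrite big_nil | right; rewrite nmul0l nmul0r]. Qed.

Lemma partial_unit_extend u j : partial_unit u ->
  exists2 u', partial_unit u' & absorbs u' (E j) /\ forall x, absorbs u x -> absorbs u' x.
Proof.
(* If [E j] is orthogonal to [u], then [E j x = E j (u x) = 0] whenever [u]
   absorbs [x], so [u + E j] still absorbs [x]. *)
move=> pu; have [[L eu] udich] := pu.
have [uj|[uj ju]] := udich j; first by exists u => //; split.
have absD x : absorbs u x -> absorbs (u + E j) x.
  move=> [ux xu].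
  have jx : mul (E j) x = 0 by rewrite -ux nmulA ju nmul0l.
  have xj : mul x (E j) = 0 by rewrite -xu -nmulA uj nmul0r.
  by rewrite /absorbs nmulDl nmulDr ux xu jx xj !addr0.
have absj : absorbs (u + E j) (E j) by rewrite /absorbs nmulDl nmulDr uj ju Eid !add0r.
exists (u + E j); last by split.
split=> [|l]; first by exists (j :: L); rewrite big_cons eu addrC.
have [->|nlj] := pselect (l = j); first by left.
have [lj jl] : mul (E l) (E j) = 0 /\ mul (E j) (E l) = 0.
  by split; apply: Eorth => // /esym.
case: (udich l) => [/absD|ul]; [by left | right].
by rewrite nmulDl nmulDr lj jl !addr0.
Qed.

Lemma partial_unit_absorb u x : partial_unit u ->
  exists2 u', partial_unit u' & absorbs u' x /\ forall y, absorbs u y -> absorbs u' y.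
Proof.
have [s ->] := Edec x; elim: s u => [|t s IH] u pu.
  by exists u => //; split=> //; rewrite big_nil; case: (absorbs_subspace u).
have [u1 pu1 [abs1 mon1]] := partial_unit_extend t.1.1 pu.
have [u2 pu2 [abs2 mon2]] := partial_unit_extend t.1.2 pu1.
have [u3 pu3 [abs3 mon3]] := IH u2 pu2.
exists u3 => //; split=> [|y /mon1 /mon2 /mon3] //.
rewrite big_cons -[mul _ (E t.1.2)]scale1r; apply: (absorbs_subspace u3).2 => //.
by apply: absorbs_corner; apply: mon3 => //; apply: mon2.
Qed.

Lemma exists_local_unit (xs : seq A) :
  exists2 u, partial_unit u & forall x, x \in xs -> absorbs u x.
Proof.
elim: xs => [|x xs [u pu uxs]]; first by exists 0 => //; apply: partial_unit0.
have [u' pu' [u'x mon]] := partial_unit_absorb x pu.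
by exists u' => // y; rewrite inE => /predU1P [->|/uxs /mon].
Qed.

End LocalUnits.

Section CyclicFunctional.
Variables (e E : A) (S : seq A).
Hypothesis EE : mul E E = E.
Hypothesis corner_span : forall y, corner E y -> in_span S y.
Hypothesis E_notin_AeA : ~ in_AeA e E.

Definition proper_left_ideal (X : A -> Prop) := [/\ forall x, X x -> corner E x,
  forall x, corner E x -> in_AeA e x -> X x, ~ X E &
  forall u x, corner E u -> X x -> X (mul u x)].

Lemma exists_maximal_left_ideal : exists X, [/\ subspace X, proper_left_ideal X &
  forall Y, subspace Y -> proper_left_ideal Y ->
    (forall x, X x -> Y x) -> forall x, Y x -> X x].
Proof.
pose P y := corner E y /\ in_AeA e y.
have Psub : subspace P.
  have [[C0 CC] [J0 JC]] := (corner_subspace E, in_AeA_subspace e).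
  by split=> // k x y [? ?] [? ?]; split; [apply: CC | apply: JC].
have PX : proper_left_ideal P.
  split=> [x []|x|[]|u x cu [cx jx]] //; split; [exact: corner_mul | exact: in_AeA_mull].
have [X [Xsub _ XX Xmax]] := maximal_subspace Psub (fun y Py => corner_span Py.1) PX.
exists X; split=> // Y Ysub YY; apply: Xmax => // y Yy.
by apply/corner_span; case: YY => + _ _ _; apply.
Qed.

Section MaximalIdeal.
Variables (X : A -> Prop) (lam : A -> K).
Hypothesis Xsub : subspace X.
Hypothesis XX : proper_left_ideal X.
Hypothesis Xmax : forall Y, subspace Y -> proper_left_ideal Y ->
  (forall x, X x -> Y x) -> forall x, Y x -> X x.
Hypothesis lamL : linear_on (corner E) lam.
Hypothesis lamX : forall x, X x -> lam x = 0.

Lemma maximal_left_ideal_cyclic w : corner E w -> lam w <> 0 ->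
  exists2 v, corner E v & forall u, corner E u -> lam (mul (mul u v) w) = lam u.
Proof.
move=> cw lw; have [XE XJ XnE Xideal] := XX.
have [[C0 CC] [X0 XC]] := (corner_subspace E, Xsub).
pose Y y := exists x v, [/\ X x, corner E v & y = x + mul v w].
have XY x : X x -> Y x by exists x, 0; rewrite nmul0l addr0.
have Ysub : subspace Y.
  split=> [|k _ _ [x1 [v1 [X1 c1 ->]]] [x2 [v2 [X2 c2 ->]]]]; first exact: XY.
  exists (k *: x1 + x2), (k *: v1 + v2); split; [exact: XC | exact: CC |].
  by rewrite nmulDZl scalerDr addrACA.
have Yw : Y w by exists 0, E; rewrite (corner_mulIl EE cw) add0r; split=> //; apply: corner_id.
(* [Y = X + (E A E) w] strictly contains [X], so by maximality it contains [E]. *)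
have [x [v [Xx cv defE]]] : Y E.
  apply: contrapT => nYE; apply: lw; apply/lamX/(Xmax Ysub _ XY Yw).
  split=> // [_ [x [v [Xx cv ->]]]|y cy jy|u _ cu [x [v [Xx cv ->]]]].
  - by rewrite -[x]scale1r; apply: CC; [apply: XE | apply: corner_mul].
  - exact/XY/XJ.
  exists (mul u x), (mul u v); rewrite nmulDr nmulA.
  by split; [apply: Xideal | apply: corner_mul |].
exists v => // u cu; have Xux : X (mul u x) by apply: Xideal.
have defu : u = mul u x + mul (mul u v) w by rewrite -nmulA -nmulDr -defE corner_mulIr.
rewrite {2}defu -[mul u x]scale1r lamL ?(lamX Xux) ?mulr0 ?add0r //; first exact: XE.
by apply: corner_mul => //; apply: corner_mul.
Qed.

End MaximalIdeal.

Lemma exists_cyclic_functional : exists lam : A -> K,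
  [/\ linear_on (corner E) lam, lam E = 1,
      forall y, corner E y -> in_AeA e y -> lam y = 0 &
      forall w, corner E w -> lam w <> 0 ->
        exists2 v, corner E v & forall u, corner E u -> lam (mul (mul u v) w) = lam u].
Proof.
have [X [Xsub XX Xmax]] := exists_maximal_left_ideal.
have [XE XJ XnE _] := XX.
have [lam [lamL lamX lamE]] := separating_functional Xsub (fun x Xx => corner_span (XE x Xx))
  (corner_span (corner_id EE)) XnE.
have lamLE : linear_on (corner E) lam by move=> k x y cx cy; apply: lamL; apply: corner_span.
exists lam; split=> //; first by move=> y cy jy; apply/lamX/XJ.
exact: maximal_left_ideal_cyclic Xsub XX Xmax lamLE lamX.
Qed.

End CyclicFunctional.

Section SimpleModule.
Variables (e E : A) (lam : A -> K).
Hypothesis EE : mul E E = E.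
Hypothesis lamL : linear_on (corner E) lam.
Hypothesis lamE : lam E = 1.
Hypothesis lamJ : forall y, corner E y -> in_AeA e y -> lam y = 0.
Hypothesis lam_cyclic : forall w, corner E w -> lam w <> 0 ->
  exists2 v, corner E v & forall u, corner E u -> lam (mul (mul u v) w) = lam u.

(* The module is spanned by the matrix coefficients of [lam]: it is the simple
   quotient of [A E] cut out by the maximal left ideal behind [lam]. *)
Definition mcoef (x a : A) : K := lam (mul (mul (mul E a) x) E).

Local Notation M := (fspan mcoef).

Definition mvec (x : A) : M := exist _ _ (in_fspan_gen mcoef x).

Lemma mcoef_corner x a : corner E (mul (mul (mul E a) x) E).
Proof. by exists (mul a x); rewrite !nmulA. Qed.

Lemma mcoefDZ k x y a : mcoef (k *: x + y) a = k * mcoef x a + mcoef y a.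
Proof. by rewrite /mcoef nmulDZr nmulDZl lamL //; apply: mcoef_corner. Qed.

Lemma mvecDZ k x y : mvec (k *: x + y) = k *: mvec x + mvec y.
Proof. by apply: fspan_inj => a; rewrite /= mcoefDZ. Qed.

Lemma mvec_surj (m : M) : exists x, m = mvec x.
Proof.
have lam0 : lam 0 = 0 := linear_on0 (corner_subspace E) lamL.
case: m => g [xs defg]; exists (\sum_(p <- xs) p.1 *: p.2); apply: fspan_inj => a /=.
rewrite defg; elim: xs {defg} => [|p xs IH]; last by rewrite !big_cons IH mcoefDZ.
by rewrite !big_nil /mcoef nmul0r nmul0l lam0.
Qed.

Lemma mcoef_mulr x b a : mcoef x (mul a b) = mcoef (mul b x) a.
Proof. by rewrite /mcoef !nmulA. Qed.

Definition mact (b : A) (m : M) : M :=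
  exist _ _ (in_fspan_comp (mcoef_mulr^~ b) (svalP m)).

Lemma mact_vec b x : mact b (mvec x) = mvec (mul b x).
Proof. by apply: fspan_inj => a; rewrite /= mcoef_mulr. Qed.

Lemma mvecE_neq0 : mvec E != 0.
Proof.
apply/eqP => /(congr1 (fun m : M => sval m E)) /=.
by rewrite /mcoef !EE lamE => /eqP; rewrite oner_eq0.
Qed.

Lemma mact_module : is_module mul mact.
Proof.
split=> [a b m|k a b m|k a m n]; first by apply: fspan_inj => t /=; rewrite nmulA.
  by have [x ->] := mvec_surj m; rewrite !mact_vec nmulDZl mvecDZ.
by apply: fspan_inj.
Qed.

Lemma mact_quasicoherent :
  (forall x, exists u, mul u x = x) -> quasicoherent mact.
Proof.
by move=> left_units m; have [x ->] := mvec_surj m; have [u ux] := left_units x;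
  exists u; rewrite mact_vec ux.
Qed.

Lemma mact_irreducible : irreducible mact.
Proof.
split; first by exists (mvec E); apply/eqP; apply: mvecE_neq0.
move=> P [P0 _ Pact]; have [Pnz|] := pselect (exists2 m, P m & m <> 0); last first.
  by move=> Pz; left=> m Pm; apply: contrapT => nm; apply: Pz; exists m.
right; have [m Pm nm] := Pnz; have [x defm] := mvec_surj m.
have [a nza] : exists a, mcoef x a <> 0.
  apply: contrapT => /forallNP nz; apply: nm; rewrite defm.
  by apply: fspan_inj => a /=; apply: contrapT; apply: nz.
have [_ [b ->] cyc] := lam_cyclic (mcoef_corner x a) nza.
have mulEE z : mul (mul z E) E = mul z E by rewrite -nmulA EE.
have PE : P (mvec E).
  suff -> : mvec E = mact (mul (mul (mul E b) E) a) m by apply: Pact.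
  apply: fspan_inj => c; rewrite defm /= mcoef_mulr /mcoef mulEE.
  by rewrite -(cyc (mul (mul E c) E)); [rewrite !nmulA !mulEE | exists c].
move=> m'; have [y ->] := mvec_surj m'.
suff -> : mvec y = mact y (mvec E) by apply: Pact.
by rewrite mact_vec; apply: fspan_inj => c; rewrite /= /mcoef -!nmulA EE.
Qed.

Lemma mact_e_eq0 m : mact e m = 0.
Proof.
have [x ->] := mvec_surj m; rewrite mact_vec; apply: fspan_inj => a /=.
rewrite /mcoef lamJ //; first exact: mcoef_corner.
suff -> : mul (mul (mul E a) (mul e x)) E = mul (mul (mul E a) e) (mul x E).
  exact: in_AeA_mid.
by rewrite !nmulA.
Qed.

Lemma mact_not_quotient_of_Ae : mul e e = e -> ~ quotient_of_Ae mul e mact.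
Proof.
move=> ee [f [_ fact fsurj]]; have [_ [a ->] fE] := fsurj (mvec E).
have Ae_e : in_Ae mul e e by exists e.
have fe : f e = 0 by rewrite -ee fact // mact_e_eq0.
move: mvecE_neq0; rewrite -fE fact // fe.
suff -> : mact a 0 = 0 by rewrite eqxx.
exact: fspan_inj.
Qed.

End SimpleModule.

Lemma generating_corner_in_AeA e E :
  generating mul e -> (forall x, exists u, mul u x = x) ->
  mul E E = E -> fin_dim (corner E) -> in_AeA e E.
Proof.
move=> [ee gen] left_units EE /fin_dim_in_span [S cornerS]; apply: contrapT => EnJ.
have [lam [lamL lamE lamJ lam_cyc]] := exists_cyclic_functional EE cornerS EnJ.
apply: (mact_not_quotient_of_Ae EE lamL lamE lamJ ee); apply: gen.
- exact: mact_module.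
- exact: mact_quasicoherent.
exact: mact_irreducible.
Qed.

Section EndZero.
Variable e : A.
Hypothesis ee : mul e e = e.
Local Notation in_Ae := (in_Ae mul e).
Local Notation End0 := (in_End0_Ae mul e).

Lemma in_Ae_subspace : subspace in_Ae.
Proof.
split; first by exists 0; rewrite nmul0l.
by move=> k _ _ [a ->] [b ->]; exists (k *: a + b); rewrite nmulDZl.
Qed.

Lemma in_Ae_mull a x : in_Ae x -> in_Ae (mul a x).
Proof. by move=> [b ->]; exists (mul a b); rewrite nmulA. Qed.

Lemma in_Ae_mulIr x : in_Ae x -> mul x e = x.
Proof. by move=> [b ->]; rewrite -nmulA ee. Qed.

Lemma End0_ext T T' : (forall x, in_Ae x -> T x = T' x) -> End0 T' -> End0 T.
Proof.
by move=> TT' [n [phi [xi [phiD xiA T'rep]]]]; exists n, phi, xi; split=> // x Ax;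
  rewrite TT' // T'rep.
Qed.

Lemma End0_add T1 T2 : End0 T1 -> End0 T2 -> End0 (fun x => T1 x + T2 x).
Proof.
move=> [n1 [phi1 [xi1 [phiD1 xiA1 rep1]]]] [n2 [phi2 [xi2 [phiD2 xiA2 rep2]]]].
exists (n1 + n2)%N, (fun k => match split k with inl k1 => phi1 k1 | inr k2 => phi2 k2 end),
  (fun k => match split k with inl k1 => xi1 k1 | inr k2 => xi2 k2 end).
split=> [k|k|x Ax]; [by case: (split k) | by case: (split k) |].
rewrite rep1 // rep2 // big_split_ord /=.
congr (_ + _); apply: eq_bigr => k _.
  by rewrite (unsplitK (inl k : 'I_n1 + 'I_n2)).
by rewrite (unsplitK (inr k : 'I_n1 + 'I_n2)).
Qed.

Lemma End0_sum (J : Type) (r : seq J) (F : J -> A -> A) :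
  (forall j, End0 (F j)) -> End0 (fun x => \sum_(j <- r) F j x).
Proof.
move=> F0; elim: r => [|j r IH].
  exists 0%N, (fun _ _ => 0), (fun _ => 0).
  by split=> [[]|[]|x _] //; rewrite !big_nil big_ord0.
by apply: End0_ext (End0_add (F0 j) IH) => x _; rewrite big_cons.
Qed.

Lemma End0_additive T : End0 T ->
  forall k x y, in_Ae x -> in_Ae y -> T (k *: x + y) = k *: T x + T y.
Proof.
move=> [n [phi [xi [phiD _ Trep]]]] k x y Ax Ay.
rewrite !Trep //; last by apply: in_Ae_subspace.2.
rewrite scaler_sumr -big_split; apply: eq_bigr => j _ /=.
by rewrite (phiD j).1 // scalerDl scalerA.
Qed.

Lemma End0_sum_apply T (J : Type) (r : seq J) (G : J -> A) : End0 T ->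
  (forall j, in_Ae (G j)) -> T (\sum_(j <- r) G j) = \sum_(j <- r) T (G j).
Proof.
move=> T0 AG; have T_0 : T 0 = 0.
  have := End0_additive T0 1 in_Ae_subspace.1 in_Ae_subspace.1.
  by rewrite !scale1r !addr0 => h; apply: (addrI (T 0)); rewrite addr0 -h.
elim: r => [|j r IH]; first by rewrite !big_nil.
rewrite !big_cons -[G j]scale1r End0_additive // ?IH ?scale1r //.
by apply: subspace_sum in_Ae_subspace _.
Qed.

Lemma End0_mul_finite (y g : A) (S : seq A) : mul g g = g ->
  (forall x, in_Ae x -> in_span S (mul g x)) -> End0 (mul (mul y g)).
Proof.
move=> gg gS; have [n [phi [zeta [phiL rep]]]] := span_coordinates S.
exists n, (fun j x => phi j (mul g x)), (fun j => mul (mul y (zeta j)) e).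
split=> [j|j|x Ax]; last first.
- transitivity (mul (mul y (mul g x)) e).
    by rewrite -!nmulA (in_Ae_mulIr Ax).
  rewrite {1}(rep _ (gS x Ax)) nmul_sumr nmul_suml; apply: eq_bigr => j _.
  by rewrite nmulZr nmulZl.
- by exists (mul y (zeta j)).
split=> [k x x' Ax Ax'|]; first by rewrite nmulDZr phiL //; apply: gS.
by exists g; split=> // x Ax; rewrite nmulA gg.
Qed.

End EndZero.

Section AUFAlgebra.
Variables (e : A) (I : Type) (E : I -> A).
Hypothesis Eid : forall i, mul (E i) (E i) = E i.
Hypothesis Eorth : forall i j, i <> j -> mul (E i) (E j) = 0.
Hypothesis Efin : forall i j, fin_dim (fun x => exists a, x = mul (mul (E i) a) (E j)).
Hypothesis Edec : forall a, exists s : seq (I * I * A),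
  a = \sum_(t <- s) mul (mul (E t.1.1) t.2) (E t.1.2).
Hypothesis gen : generating mul e.
Local Notation in_Ae := (in_Ae mul e).
Local Notation End0 := (in_End0_Ae mul e).

Let ee : mul e e = e := gen.1.

Lemma idempotent_in_AeA i : in_AeA e (E i).
Proof.
apply: generating_corner_in_AeA => //; last exact: Efin.
move=> x; have [u _ ux] := exists_local_unit Eid Eorth Edec [:: x].
by exists u; apply: (ux x (mem_head _ _)).1.
Qed.

Lemma exists_local_unit_AeA (xs : seq A) :
  exists2 u, in_AeA e u & forall x, x \in xs -> absorbs u x.
Proof.
have [_ [[L ->] _] uxs] := exists_local_unit Eid Eorth Edec xs.
by exists (\sum_(l <- L) E l) => //; apply: subspace_sum (in_AeA_subspace e) idempotent_in_AeA.
Qed.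

Lemma Ae_annihilator_eq0 c : (forall x, in_Ae x -> mul c x = 0) -> c = 0.
Proof.
move=> c0; have [u [ps ->] uc] := exists_local_unit_AeA [:: c].
rewrite -(uc c (mem_head _ _)).2 nmul_sumr big1 // => p _.
by rewrite nmulA c0 ?nmul0l //; exists p.1.
Qed.

Lemma corner_Ae_span j : exists S, forall x, in_Ae x -> in_span S (mul (E j) x).
Proof.
have [s es] := Edec e.
have [S HS] : exists S, forall a, in_span S
    (\sum_(t <- s) mul (mul (mul (E j) a) (E t.1.1)) (mul t.2 (E t.1.2))).
  apply: in_span_sum => t; have [S HS] := fin_dim_in_span (Efin j t.1.1).
  by exists [seq mul z (mul t.2 (E t.1.2)) | z <- S] => a; apply/in_span_mulr/HS; exists a.
exists S => _ [a ->]; rewrite nmulA es nmul_sumr.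
suff -> : \sum_(t <- s) mul (mul (E j) a) (mul (mul (E t.1.1) t.2) (E t.1.2)) =
  \sum_(t <- s) mul (mul (mul (E j) a) (E t.1.1)) (mul t.2 (E t.1.2)) by apply: HS.
by apply: eq_bigr => t _; rewrite !nmulA.
Qed.

Lemma End0_mul a : End0 (mul a).
Proof.
have [s ->] := Edec a.
pose F t := mul (mul (mul (E t.1.1) t.2) (E t.1.2)).
apply: (End0_ext _ (End0_sum s (F := F) _)) => [x _|t]; first by rewrite nmul_suml.
have [S HS] := corner_Ae_span t.1.2.
exact: (End0_mul_finite ee (mul (E t.1.1) t.2) (Eid t.1.2) HS).
Qed.

Lemma End0_local_unit T :
  End0 T -> exists2 u, in_AeA e u & forall x, in_Ae x -> T x = T (mul u x).
Proof.
move=> [n [phi [xi [phiD xiA Trep]]]].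
pose f k := sval (cid (phiD k).2).
have [u uJ uf] := exists_local_unit_AeA (codom f).
exists u => // x Ax; rewrite !Trep //; last exact: in_Ae_mull.
apply: eq_bigr => k _; congr (_ *: _).
have [_ fk] := svalP (cid (phiD k).2).
rewrite -fk // -[in RHS]fk; last exact: in_Ae_mull.
by rewrite nmulA (uf _ (codom_f f k)).2.
Qed.

Lemma End0_right_mul T :
  in_End0_right_Ae mul e T -> exists a, forall x, in_Ae x -> T x = mul a x.
Proof.
move=> [T0 Tc]; have [_ [ps ->] Tu] := End0_local_unit T0.
exists (\sum_(p <- ps) mul (T (mul p.1 e)) (mul e p.2)) => x Ax.
rewrite Tu // !nmul_suml (End0_sum_apply _ T0) => [|p]; last exact: in_Ae_mull.
apply: eq_bigr => p _.
have defc : mul (mul e (mul p.2 x)) e = mul (mul e p.2) x.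
  by rewrite -!nmulA (in_Ae_mulIr ee Ax).
rewrite -(nmulA (T _)) -defc -Tc; [|by exists p.1|by exists (mul p.2 x)].
by rewrite defc !nmulA -(nmulA p.1 e e) ee.
Qed.

End AUFAlgebra.

End NuAlgebra.

Theorem lemma11p6 (R : realType) (A : lmodType R[i]) (mul : A -> A -> A) (e : A) :
  is_nualg mul -> AUF mul -> generating mul e ->
  [/\ forall (k : R[i]) a b x, in_Ae mul e x ->
        mul (k *: a + b) x = k *: mul a x + mul b x,
      forall a : A, in_End0_right_Ae mul e (mul a),
      forall a b : A, (forall x, in_Ae mul e x -> mul a x = mul b x) -> a = b
    & forall T : A -> A, in_End0_right_Ae mul e T ->
        exists a : A, forall x, in_Ae mul e x -> T x = mul a x].
Proof.
move=> Hnu [I [E [Eid Eorth Efin Edec]]] gen; split.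
- by move=> k a b x _; apply: (nmulDZl Hnu).
- move=> a; split; first exact: (End0_mul Hnu Eid Efin Edec gen).
  by move=> *; apply: (nmulA Hnu).
- move=> a b ab; apply/eqP; rewrite -subr_eq0; apply/eqP.
  apply: (Ae_annihilator_eq0 Hnu Eid Eorth Efin Edec gen) => x Ax.
  by rewrite (nmulBl Hnu) ab ?subrr.
exact: (End0_right_mul Hnu Eid Eorth Efin Edec gen).
Qed.
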